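(* Let $d\ge 0$ be an integer. Then: (1) $f(1,d)=\frac{2}{d+2}$ if $d$ is even, and $f(1,d)=\frac{2(d+2)}{(d+1)(d+3)}$ if $d$ is odd. (2) The value $f(1,d)$ equals $\frac{\alpha_1(G)}{n(G)}$ for $G=J_{d+2}$ when $d$ is even, and for $G=(d+3)J_{d+1}\cup(d+1)J_{d+3}$ (disjoint union of $d+3$ copies of $J_{d+1}$ and $d+1$ copies of $J_{d+3}$) when $d$ is odd; these graphs have average degree at most $d$. (3) $f(1,d)\ge \frac{2}{d+2}$. (4) For every finite simple graph $G$ on $n\ge 1$ vertices, $\alpha_1(G)\ge \frac{2n}{\lceil d(G)\rceil+2}$.
   Context: For a graph $G=(V,E)$ and an integer $k\ge 0$, a $k$-independent set is a set $S\subseteq V$ such that the induced subgraph $G[S]$ has maximum degree at most $k$; $\alpha_k(G)$ denotes the maximum cardinality of a $k$-independent set of $G$. $n(G)$ is the number of vertices and $d(G)=2|E(G)|/n(G)$ the average degree. For integers $d,k\ge 0$, $f(k,d)=\inf\left\{\frac{\alpha_k(G)}{n(G)} : G \text{ a finite simple graph with at least one vertex and } d(G)\le d\right\}$. For an even integer $m\ge 2$, $J_m$ denotes the complete graph $K_m$ with the edges of a perfect matching removed. *)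

From HB Require Import structures.
From mathcomp Require Import all_boot all_order all_algebra.
Set Implicit Arguments. Unset Strict Implicit. Unset Printing Implicit Defensive.
Import Order.TTheory GRing.Theory Num.Theory.

Definition simple_graph (T : finType) (g : rel T) : Prop :=
  symmetric g /\ irreflexive g.

Definition nverts (T : finType) := #|T|.

Definition nedges (T : finType) (g : rel T) : nat :=
  #|[set E : {set T} | [exists x, exists y, g x y && (E == [set x; y])]]|.

Local Open Scope ring_scope.

Definition avgdeg (T : finType) (g : rel T) : rat :=
  (2 * nedges g)%:R / (#|T|)%:R.

Definition kindep (T : finType) (g : rel T) (k : nat) (S : {set T}) : bool :=
  [forall x in S, #|[set y in S | g x y]| <= k]%N.

Definition alpha (T : finType) (g : rel T) (k : nat) : nat :=
  \max_(S : {set T} | kindep g k S) #|S|.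

Definition kratio (T : finType) (g : rel T) (k : nat) : rat :=
  (alpha g k)%:R / (#|T|)%:R.

Definition fvals (k d : nat) (r : rat) : Prop :=
  exists (T : finType) (g : rel T),
    [/\ simple_graph g, (0 < #|T|)%N, avgdeg g <= d%:R & r = kratio g k].

Definition is_f (k d : nat) (x : rat) : Prop :=
  (forall r, fvals k d r -> x <= r) /\
  (forall y : rat, (forall r, fvals k d r -> y <= r) -> y <= x).

(* J_m : K_m minus the perfect matching {2i, 2i+1} (m even) *)
Definition Jrel (m : nat) : rel 'I_m :=
  fun i j => (i != j) && ((i : nat)./2 != (j : nat)./2).

Definition copiesJ (c m : nat) : rel ('I_c * 'I_m)%type :=
  fun p q => (p.1 == q.1) && Jrel p.2 q.2.

Definition sumrel (A B : finType) (ga : rel A) (gb : rel B) : rel (A + B)%type :=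
  fun p q => match p, q with
             | inl a, inl a' => ga a a'
             | inr b, inr b' => gb b b'
             | _, _ => false
             end.

Definition oddGraph (d : nat) :=
  sumrel (@copiesJ d.+3 d.+1) (@copiesJ d.+1 d.+3).

(* The key inequality (degsum_alpha1_bound) states that for every
   t >= 1 and every vertex set U,
       4t|U| <= 2t(t+1) alpha_1(G[U]) + 2|E(G[U])|.
   It is proved by induction on t and on |U|: small degree sum reduces to t - 1,
   a vertex of degree >= 2t is deleted, and when all degrees are < 2t Lovasz's
   partition theorem (a colouring with t colours minimising monochromatic
   edges) gives |U| <= t alpha_1(G[U]).  Taking t = floor(k/2) + 1 for an
   integer k >= d(G) yields 2n <= (k+2) alpha_1 and, for k odd,
   2(k+2) n <= (k+1)(k+3) alpha_1 (alpha1_lower).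

   J_m and every copy of J inside the odd-case graph are complete
   multipartite graphs with parts of size 2, so a 1-independent set takes at
   most two vertices of each copy (kindep1_block_bound); counting degrees
   shows these graphs have average degree d, so they attain the lower bound. *)

From HB Require Import structures.
From mathcomp Require Import all_boot all_order all_algebra.
From mathcomp Require Import zify.
Import Order.TTheory GRing.Theory Num.Theory.
Set Implicit Arguments. Unset Strict Implicit.

Lemma card_sep_sum (T : finType) (S : {set T}) (P : pred T) :
  #|[set y in S | P y]| = \sum_(y in S) P y.
Proof.
rewrite -sum1_card big_mkcond [RHS]big_mkcond /=.
by apply: eq_bigr => y _; rewrite !inE; case: (y \in S); case: (P y).
Qed.

Lemma sum_by_class (T K : finType) (f : T -> K) (S : {set T}) (P : pred T) :
  \sum_(y in S) P y = \sum_(c : K) \sum_(y in S) (P y && (f y == c)).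
Proof.
rewrite exchange_big /=; apply: eq_bigr => y _.
rewrite (bigD1 (f y)) //= eqxx andbT big1 ?addn0 // => c cy.
by rewrite eq_sym (negbTE cy) andbF.
Qed.

Lemma sum_setT (T : finType) (F : T -> nat) : \sum_(x in [set: T]) F x = \sum_x F x.
Proof. by apply: eq_bigl => x; rewrite inE. Qed.

Section DegreeSums.
Variables (T : finType) (g : rel T).
Hypothesis gsimple : simple_graph g.

Definition deg_in (U : {set T}) (x : T) : nat := \sum_(y in U) g x y.
Definition degsum (U : {set T}) : nat := \sum_(x in U) deg_in U x.

Lemma degsum_delete (U : {set T}) v :
  v \in U -> degsum U = degsum (U :\ v) + 2 * deg_in U v.
Proof.
case: gsimple => sym irr vU.
rewrite /degsum (big_setD1 _ vU) /=.
rewrite (eq_bigr (fun x => g x v + deg_in (U :\ v) x)); last first.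
  by move=> x _; rewrite /deg_in (big_setD1 _ vU).
rewrite big_split /=.
have -> : \sum_(x in U :\ v) g x v = deg_in U v.
  rewrite /deg_in (big_setD1 _ vU) irr /= add0n.
  by apply: eq_bigr => x _; rewrite sym.
lia.
Qed.

Definition arcs : {set T * T} := [set p | g p.1 p.2].

Lemma degsum_arcs : degsum setT = #|arcs|.
Proof.
rewrite /degsum /deg_in sum_setT.
rewrite (eq_bigr (fun x => \sum_y g x y)); last by move=> x _; rewrite sum_setT.
rewrite pair_bigA /= -sum1_card [RHS]big_mkcond /=.
by apply: eq_bigr => p _; rewrite /arcs inE.
Qed.

Lemma arcs_of_edge x y : g x y ->
  [set p in arcs | [set p.1; p.2] == [set x; y]] = [set (x, y); (y, x)].
Proof.
case: gsimple => sym irr gxy.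
have xy : x != y by apply/eqP => e; move: gxy; rewrite e irr.
apply/setP => -[a b]; rewrite !inE /=; apply/idP/idP.
- move=> /andP[gab /eqP hs].
  have ha : a \in [set x; y] by rewrite -hs !inE eqxx.
  have hb : b \in [set x; y] by rewrite -hs !inE eqxx orbT.
  have ab : a != b by apply/eqP => e; move: gab; rewrite e irr.
  move: ha hb; rewrite !inE !xpair_eqE.
  case/orP=> /eqP ea; case/orP=> /eqP eb; subst;
    rewrite ?eqxx ?(negbTE xy) //= ?andbT ?orbT //; by rewrite eqxx in ab.
- case/orP=> /eqP [-> ->]; first by rewrite gxy eqxx.
  by rewrite sym gxy setUC eqxx.
Qed.

Lemma handshake : 2 * nedges g = degsum setT.
Proof.
case: (gsimple) => sym irr.
pose Es := [set E : {set T} | [exists x, exists y, g x y && (E == [set x; y])]].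
rewrite degsum_arcs /nedges -/Es.
have -> : #|arcs| = \sum_(p in arcs) \sum_(E in Es) ([set p.1; p.2] == E).
  rewrite -sum1_card; apply: eq_bigr => p pA.
  have pE : [set p.1; p.2] \in Es.
    rewrite inE; apply/existsP; exists p.1; apply/existsP; exists p.2.
    by rewrite eqxx andbT; move: pA; rewrite inE.
  rewrite (bigD1 _ pE) /= eqxx big1 // => E /andP[_ hE].
  by rewrite eq_sym (negbTE hE).
rewrite exchange_big /= mulnC -sum_nat_const.
apply: eq_bigr => E; rewrite inE => /existsP[x /existsP[y /andP[gxy /eqP ->]]].
have xy : x != y by apply/eqP => e; move: gxy; rewrite e irr.
by rewrite -card_sep_sum arcs_of_edge // cards2 xpair_eqE negb_and xy.
Qed.

End DegreeSums.

Lemma handshake_sum (T : finType) (g : rel T) : simple_graph g ->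
  2 * nedges g = \sum_x \sum_y g x y.
Proof.
move=> gs; rewrite handshake // /degsum /deg_in sum_setT.
by apply: eq_bigr => x _; rewrite sum_setT.
Qed.

Section AlphaIn.
Variables (T : finType) (g : rel T).

Definition alpha1_in (U : {set T}) : nat :=
  \max_(S : {set T} | (S \subset U) && kindep g 1 S) #|S|.

Lemma alpha1_in_ge (U S : {set T}) :
  S \subset U -> kindep g 1 S -> #|S| <= alpha1_in U.
Proof. by move=> SU kS; apply: leq_bigmax_cond; rewrite SU kS. Qed.

Lemma alpha1_in_mono (U V : {set T}) : U \subset V -> alpha1_in U <= alpha1_in V.
Proof.
move=> UV; apply/bigmax_leqP => S /andP[SU kS].
by apply: alpha1_in_ge => //; exact: subset_trans UV.
Qed.

Lemma alpha1_setT : alpha g 1 = alpha1_in setT.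
Proof. by apply: eq_bigl => S; rewrite subsetT. Qed.

End AlphaIn.

Section LovaszPartition.
(* Lovasz: if every vertex of U has degree < 2t in G[U], then U splits into t
   classes each inducing a graph of maximum degree <= 1; hence
   |U| <= t * alpha_1(G[U]).  The partition is a colouring f : U -> 'I_t
   minimising the number of monochromatic arcs. *)
Variables (T : finType) (g : rel T) (U : {set T}) (t : nat).
Hypothesis gsimple : simple_graph g.

Definition coldeg (f : T -> 'I_t) (x : T) (c : 'I_t) : nat :=
  \sum_(y in U) (g x y && (f y == c)).

(* Monochromatic arcs inside U avoiding x; unchanged by recolouring x. *)
Definition mono_arcs_off (f : T -> 'I_t) (x : T) : nat :=
  \sum_(y in U :\ x) \sum_(z in U :\ x) (g y z && (f y == f z)).

Definition mono_arcs (f : {ffun T -> 'I_t}) : nat :=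
  \sum_(y in U) \sum_(z in U) (g y z && (f y == f z)).

Lemma mono_arcs_split (f : {ffun T -> 'I_t}) x : x \in U ->
  mono_arcs f = 2 * coldeg f x (f x) + mono_arcs_off f x.
Proof.
case: gsimple => sym irr xU; rewrite /mono_arcs (big_setD1 _ xU) /=.
rewrite [X in _ + X](eq_bigr (fun y => (g y x && (f y == f x)) +
            \sum_(z in U :\ x) (g y z && (f y == f z)))); last first.
  by move=> y _; rewrite (big_setD1 x xU).
rewrite big_split /=.
have -> : \sum_(y in U :\ x) (g y x && (f y == f x)) = coldeg f x (f x).
  rewrite /coldeg (big_setD1 x xU) /= irr /= add0n.
  by apply: eq_bigr => y _; rewrite sym.
have -> : \sum_(z in U) (g x z && (f x == f z)) = coldeg f x (f x).
  by apply: eq_bigr => y _; rewrite eq_sym.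
rewrite /mono_arcs_off; lia.
Qed.

Lemma mono_arcs_recolour (f : {ffun T -> 'I_t}) x c : x \in U ->
  mono_arcs [ffun y => if y == x then c else f y] =
  2 * coldeg f x c + mono_arcs_off f x.
Proof.
case: gsimple => _ irr xU; set f' := [ffun y => _].
rewrite (mono_arcs_split _ xU) ffunE eqxx; congr (2 * _ + _).
- apply: eq_bigr => y _; rewrite ffunE.
  by case: ifP => [/eqP -> | //]; rewrite irr.
- apply: eq_bigr => y; rewrite !inE => /andP[yx _]; apply: eq_bigr => z.
  by rewrite !inE => /andP[zx _]; rewrite !ffunE (negbTE yx) (negbTE zx).
Qed.

Lemma sum_coldeg (f : T -> 'I_t) x : \sum_c coldeg f x c = deg_in g U x.
Proof. by rewrite /deg_in (sum_by_class f U (g x)). Qed.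

Hypothesis t_gt0 : 0 < t.
Hypothesis small_deg : forall x, x \in U -> deg_in g U x < 2 * t.

Definition best_colouring : {ffun T -> 'I_t} :=
  [arg min_(f < [ffun=> Ordinal t_gt0]) mono_arcs f].

(* In a best colouring each vertex has at most one neighbour of its colour:
   its own colour is its least frequent one, and the t colour degrees sum to
   less than 2t. *)
Lemma best_colouring_own x : x \in U -> coldeg best_colouring x (best_colouring x) <= 1.
Proof.
move=> xU; rewrite /best_colouring; case: arg_minnP => // f _ fmin.
have own_min c : coldeg f x (f x) <= coldeg f x c.
  have := fmin [ffun y => if y == x then c else f y] isT.
  by rewrite (mono_arcs_split _ xU) (mono_arcs_recolour _ c xU) leq_add2r leq_pmul2l.
have : t * coldeg f x (f x) <= deg_in g U x.
  rewrite -(sum_coldeg f) -[t in t * _]card_ord -sum_nat_const.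
  by apply: leq_sum => c _; exact: own_min.
have := small_deg xU; set o := coldeg f x (f x) => h1 h2.
have : t * o < t * 2 by lia.
by rewrite ltn_pmul2l //; lia.
Qed.

Definition colour_class (c : 'I_t) : {set T} := [set y in U | best_colouring y == c].

Lemma colour_class_kindep c : kindep g 1 (colour_class c).
Proof.
apply/forall_inP => x; rewrite !inE => /andP[xU /eqP fx].
rewrite card_sep_sum -fx.
apply: leq_trans (best_colouring_own xU); rewrite /coldeg.
rewrite big_mkcond [X in _ <= X]big_mkcond /=; apply: leq_sum => y _.
by rewrite !inE; case: (y \in U); case: (g x y); case: (_ == _).
Qed.

Lemma lovasz : #|U| <= t * alpha1_in g U.
Proof.
have -> : #|U| = \sum_c #|colour_class c|.
  rewrite -sum1_card (sum_by_class best_colouring U (fun _ => true)).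
  by apply: eq_bigr => c _; rewrite card_sep_sum.
case: (@arg_maxnP _ (Ordinal t_gt0) xpredT (fun c => #|colour_class c|) isT).
move=> c _ cmax.
apply: (@leq_trans (t * #|colour_class c|)).
  rewrite -[t in t * _]card_ord -sum_nat_const.
  by apply: leq_sum => c' _; exact: cmax.
rewrite leq_pmul2l // alpha1_in_ge ?colour_class_kindep //.
by apply/subsetP => y; rewrite inE => /andP[].
Qed.

End LovaszPartition.

Section LowerBound.
Variables (T : finType) (g : rel T).
Hypothesis gsimple : simple_graph g.

(* Induction on t, then on |U|: if the degree sum is small the bound for t-1
   suffices; a vertex of degree >= 2t can be deleted; otherwise all degrees
   are < 2t and Lovasz's partition applies. *)
Lemma degsum_alpha1_bound t (U : {set T}) :
  0 < t -> 4 * t * #|U| <= 2 * t * (t + 1) * alpha1_in g U + degsum g U.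
Proof.
elim: t U => [//|t IHt] U _.
have [n] := ubnP #|U|; elim: n U => // n IHn U Un.
case: (ltnP (degsum g U) (2 * t * #|U|)) => hD.
  have t_gt0 : 0 < t by case: t {IHt IHn} hD => //; rewrite mul0n.
  have h := IHt U t_gt0.
  set a := alpha1_in g U in h *; set D := degsum g U in h hD *.
  set m := #|U| in h hD *.
  have h2 : (t + 2) * (4 * t * m) <= (t + 2) * (2 * t * (t + 1) * a + D).
    by rewrite leq_mul2l h orbT.
  nia.
case: (boolP [exists v in U, 2 * t.+1 <= deg_in g U v]).
  case/exists_inP => v vU hv.
  have ltUn : #|U :\ v| < n by rewrite (cardsD1 v U) vU in Un.
  have h := IHn (U :\ v) ltUn.
  have hal := alpha1_in_mono g (subsetDl U [set v]).
  rewrite (degsum_delete gsimple vU).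
  have := cardsD1 v U; rewrite vU.
  set a := alpha1_in g U in hal *; set a' := alpha1_in g (U :\ v) in h hal *.
  nia.
rewrite negb_exists_in => /forall_inP small.
have hl : #|U| <= t.+1 * alpha1_in g U.
  by apply: lovasz => // x xU; have := small x xU; rewrite -ltnNge.
set a := alpha1_in g U in hl *; set D := degsum g U in hD *.
set m := #|U| in hl hD *.
have h2 : 2 * (t + 2) * m <= 2 * (t + 2) * (t.+1 * a) by rewrite leq_mul2l hl orbT.
nia.
Qed.

(* The bounds on alpha_1 in terms of an integer bound k >= d(G):
   2n <= (k+2) alpha_1, and 2(k+2)n <= (k+1)(k+3) alpha_1 when k is odd.
   Take t = floor(k/2) + 1 in the key inequality. *)
Lemma alpha1_lower k : 2 * nedges g <= k * #|T| ->
  2 * #|T| <= (k + 2) * alpha g 1 /\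
  (odd k -> 2 * (k + 2) * #|T| <= (k + 1) * (k + 3) * alpha g 1).
Proof.
move=> hk.
have := degsum_alpha1_bound setT (ltn_addl k./2 (ltnSn 0)).
rewrite cardsT -handshake // -alpha1_setT.
have := odd_double_half k; move: hk.
set a := alpha g 1; set n := #|T|; set E := nedges g.
move: (k./2) => i; rewrite -addnn.
case: (odd k) => /= hk hki h; rewrite -hki in hk *.
- have h1 : (2 * i + 3) * n <= 2 * (i + 1) * (i + 2) * a by nia.
  split=> [|_]; last by nia.
  have h2 : (2 * i + 3) * (2 * n) <= (2 * i + 3) * ((2 * i + 3) * a) by nia.
  by rewrite leq_pmul2l // in h2; nia.
- split=> //.
  have h2 : (i + 2) * (2 * n) <= (i + 2) * ((0 + (i + i) + 2) * a) by nia.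
  by rewrite leq_pmul2l // in h2; lia.
Qed.

End LowerBound.

Lemma kindep1_two_nbrs (T : finType) (g : rel T) (S : {set T}) x y z :
  kindep g 1 S -> x \in S -> y \in S -> z \in S -> y != z ->
  g x y -> g x z -> False.
Proof.
move=> /forall_inP /(_ x) kS xS yS zS yz gy gz.
have : [set y; z] \subset [set w in S | g x w].
  by apply/subsetP => w; rewrite !inE => /orP[] /eqP ->; rewrite ?yS ?zS ?gy ?gz.
by move/subset_leq_card; rewrite cards2 yz; have := kS xS; lia.
Qed.

Section BlockBound.
(* Vertices are grouped into blocks by [block]; inside a block, vertices with
   different labels are adjacent and each label occurs at most twice, i.e.
   each block induces a complete multipartite graph with parts of size <= 2.
   Then a 1-independent set meets every block in at most two vertices. *)
Variables (T K : finType) (g : rel T) (block : T -> K) (label : T -> nat).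
Hypothesis adj_labels : forall x y,
  block x = block y -> label x != label y -> g x y.
Hypothesis label_twice : forall x y z,
  block x = block y -> block y = block z -> label x = label y -> label y = label z ->
  x != y -> y != z -> z != x -> False.

Lemma kindep1_block_bound S : kindep g 1 S -> #|S| <= 2 * #|K|.
Proof.
move=> kS; rewrite -sum1_card (sum_by_class block S (fun _ => true)).
rewrite mulnC -sum_nat_const; apply: leq_sum => k _.
rewrite -card_sep_sum leqNgt; apply/negP => /card_gt2P [a [b [c [[] ]]]].
rewrite !inE => /andP[aS /eqP ka] /andP[bS /eqP kb] /andP[cS /eqP kc] [ab bc ca].
have kab : block a = block b by rewrite ka kb.
have kbc : block b = block c by rewrite kb kc.
have kac : block a = block c by rewrite kab.
case: (eqVneq (label a) (label b)) => hab; case: (eqVneq (label b) (label c)) => hbc.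
- exact: (label_twice kab kbc).
-
  apply: (kindep1_two_nbrs kS cS aS bS ab); apply: adj_labels => //;
    by rewrite ?hab eq_sym.
-
  apply: (kindep1_two_nbrs kS aS bS cS bc); apply: adj_labels; by rewrite // -hbc.
- case: (eqVneq (label a) (label c)) => hac.
  +
    apply: (kindep1_two_nbrs kS bS aS cS); rewrite 1?eq_sym //;
      by apply: adj_labels; rewrite // eq_sym.
  +
    by apply: (kindep1_two_nbrs kS aS bS cS bc); apply: adj_labels.
Qed.

End BlockBound.

Lemma half_fibre_small (a b c : nat) :
  a./2 = b./2 -> b./2 = c./2 -> a != b -> b != c -> c != a -> False.
Proof.
have eq_half a' b' : a'./2 = b'./2 -> odd a' = odd b' -> a' = b'.
  by move=> h o; rewrite -[a']odd_double_half -[b']odd_double_half h o.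
move=> hab hbc nab nbc nca.
case oa: (odd a); case ob: (odd b); case oc: (odd c).
all: first [ by move: nab; rewrite (eq_half _ _ hab) ?oa ?ob ?eqxx
           | by move: nbc; rewrite (eq_half _ _ hbc) ?ob ?oc ?eqxx
           | by move: nca; rewrite (eq_half _ _ (etrans hab hbc)) ?oa ?oc ?eqxx ].
Qed.

Lemma Jrel_simple m : simple_graph (@Jrel m).
Proof.
split; last by move=> x; rewrite /Jrel eqxx.
by move=> x y; rewrite /Jrel eq_sym; congr andb; rewrite eq_sym.
Qed.

Lemma oddGraph_simple d : simple_graph (@oddGraph d).
Proof.
have copies_sym c m : symmetric (@copiesJ c m).
  by move=> p q; rewrite /copiesJ eq_sym (fst (Jrel_simple m)).
split.
- by case=> [p|p] [q|q] //=; rewrite copies_sym.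
- by case=> [p|p] /=; rewrite /copiesJ eqxx /= (snd (Jrel_simple _)).
Qed.

(* J_m is a single block labelled by halves, so alpha_1(J_m) <= 2. *)
Lemma Jrel_kindep1_le m (S : {set 'I_m}) : kindep (@Jrel m) 1 S -> #|S| <= 2.
Proof.
move=> kS; apply: (@leq_trans (2 * #|{: unit}|)); last by rewrite card_unit.
apply: (@kindep1_block_bound _ unit (@Jrel m) (fun=> tt) (fun i => (i : nat)./2) _ _ S) kS.
- by move=> x y _ hne; apply/andP; split=> //; apply: contraNneq hne => ->.
- by move=> x y z _ _; exact: half_fibre_small.
Qed.

Definition oddBlock d (x : ('I_d.+3 * 'I_d.+1) + ('I_d.+1 * 'I_d.+3)) : 'I_d.+3 + 'I_d.+1 :=
  match x with inl p => inl p.1 | inr p => inr p.1 end.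
Definition oddLabel d (x : ('I_d.+3 * 'I_d.+1) + ('I_d.+1 * 'I_d.+3)) : nat :=
  match x with inl p => (p.2 : nat)./2 | inr p => (p.2 : nat)./2 end.

(* Blocks of oddGraph d are its 2d + 4 copies of J, so alpha_1 <= 4(d+2). *)
Lemma oddGraph_kindep1_le d (S : {set ('I_d.+3 * 'I_d.+1) + ('I_d.+1 * 'I_d.+3)}) :
  kindep (@oddGraph d) 1 S -> #|S| <= 4 * d.+2.
Proof.
have pair_neq (A B : eqType) (p q : A * B) : p.1 = q.1 -> p != q -> p.2 != q.2.
  by case: p q => [p1 p2] [q1 q2] /= ->; apply: contraNneq => ->.
move=> kS; apply: (@leq_trans (2 * #|{: 'I_d.+3 + 'I_d.+1}|)); last first.
  by rewrite card_sum !card_ord; lia.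
apply: (@kindep1_block_bound _ _ (@oddGraph d) (@oddBlock d) (@oddLabel d) _ _ S) kS.
- case=> [p|p] [q|q] //= [e] hne; rewrite /copiesJ e eqxx /= /Jrel hne andbT;
    by apply/eqP => e2; move: hne; rewrite e2 eqxx.
- case=> [p|p] [q|q] [r|r] //= [e1] [e2] h1 h2 n1 n2 n3;
    exact: (half_fibre_small h1 h2 (pair_neq _ _ _ _ e1 n1) (pair_neq _ _ _ _ e2 n2)
              (pair_neq _ _ _ _ (esym (etrans e1 e2)) n3)).
Qed.

Lemma Jrel_partner m (x : 'I_m) : ~~ odd m ->
  exists y : 'I_m, (y != x) && ((y : nat)./2 == (x : nat)./2).
Proof.
move=> om.
have hm := odd_double_half m; rewrite (negbTE om) add0n in hm.
have hx := odd_double_half x.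
have xm := ltn_ord x.
case ox: (odd x) hx => /= hx.
- have ylt : (x : nat).-1 < m by lia.
  exists (Ordinal ylt); apply/andP; split.
    by rewrite -val_eqE /=; apply/eqP; rewrite -hx -!addnn; lia.
  by rewrite /= -hx /= add0n doubleK uphalf_double.
- have ylt : (x : nat).+1 < m by move: hm hx xm; rewrite -!addnn; lia.
  exists (Ordinal ylt); apply/andP; split.
    by rewrite -val_eqE /=; apply/eqP; lia.
  by rewrite /= -hx add0n doubleK uphalf_double.
Qed.

(* J_m (m even) has maximum degree m - 2: x and its partner are non-neighbours. *)
Lemma Jrel_deg m (x : 'I_m) : ~~ odd m -> \sum_y (@Jrel m) x y <= m - 2.
Proof.
move=> om; have [y0 /andP[y0x hy0]] := Jrel_partner x om.
rewrite -sum_setT -card_sep_sum.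
have sub : [set y in [set: 'I_m] | Jrel x y] \subset ~: [set x; y0].
  apply/subsetP => y; rewrite !inE /Jrel /= => /andP[xy hxy].
  by apply/negP => /orP[] /eqP e; subst; rewrite ?eqxx ?(eqP hy0) ?eqxx in xy hxy.
apply: (leq_trans (subset_leq_card sub)).
by have := cardsC [set x; y0]; rewrite cards2 eq_sym y0x card_ord => /(congr1 (subn^~ 2)); rewrite addKn => ->.
Qed.

Lemma copiesJ_deg c m (p : 'I_c * 'I_m) : ~~ odd m ->
  \sum_q (@copiesJ c m) p q <= m - 2.
Proof.
move=> om.
have -> : \sum_q (@copiesJ c m) p q = \sum_i \sum_j ((p.1 == i) && Jrel p.2 j).
  by rewrite pair_bigA.
rewrite (bigD1 p.1) //= [X in _ + X]big1 ?addn0; first by rewrite eqxx /= Jrel_deg.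
by move=> i /negbTE; rewrite eq_sym => ->; rewrite big1.
Qed.

Lemma Jrel_edges m : ~~ odd m -> 2 * nedges (@Jrel m) <= (m - 2) * m.
Proof.
move=> om; rewrite handshake_sum; last exact: Jrel_simple.
apply: (@leq_trans (\sum_(x : 'I_m) (m - 2))); last by rewrite sum_nat_const card_ord mulnC.
by apply: leq_sum => x _; exact: Jrel_deg.
Qed.

(* d(oddGraph d) = d: degree d - 1 on the J_{d+1}'s, d + 1 on the J_{d+3}'s. *)
Lemma oddGraph_edges d : odd d ->
  2 * nedges (@oddGraph d) <= d * (2 * (d.+1 * d.+3)).
Proof.
move=> od; rewrite handshake_sum; last exact: oddGraph_simple.
rewrite (big_sumType _ xpredT) /=.
apply: (@leq_trans (d.+3 * d.+1 * (d.+1 - 2) + d.+1 * d.+3 * (d.+3 - 2))); last first.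
  by case: d od => //= d' _; nia.
apply: leq_add.
- apply: (@leq_trans (\sum_(a : 'I_d.+3 * 'I_d.+1) (d.+1 - 2)));
    last by rewrite sum_nat_const card_prod !card_ord.
  apply: leq_sum => a _; rewrite (big_sumType _ xpredT) /= [X in _ + X]big1 ?addn0 //.
  by apply: copiesJ_deg; rewrite /= ?negbK.
- apply: (@leq_trans (\sum_(a : 'I_d.+1 * 'I_d.+3) (d.+3 - 2)));
    last by rewrite sum_nat_const card_prod !card_ord.
  apply: leq_sum => a _; rewrite (big_sumType _ xpredT) /= big1 ?add0n //.
  by apply: copiesJ_deg; rewrite /= ?negbK.
Qed.

Local Open Scope ring_scope.

Lemma ratio_le (a b c e : nat) : (0 < b)%N -> (0 < e)%N -> (a * e <= c * b)%N ->
  a%:R / b%:R <= c%:R / e%:R :> rat.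
Proof.
move=> b0 e0 h.
by rewrite ler_pdivlMr ?ltr0n // mulrAC ler_pdivrMr ?ltr0n // -!natrM ler_nat.
Qed.

Lemma ratio_eq (a b c e : nat) : (0 < b)%N -> (0 < e)%N -> (a * e = c * b)%N ->
  a%:R / b%:R = c%:R / e%:R :> rat.
Proof. by move=> b0 e0 h; apply/eqP; rewrite eq_le !ratio_le // h. Qed.

Lemma avgdeg_le_nat (T : finType) (g : rel T) (k : nat) : (0 < #|T|)%N ->
  (avgdeg g <= k%:R) = (2 * nedges g <= k * #|T|)%N.
Proof. by move=> n0; rewrite /avgdeg ler_pdivrMr ?ltr0n // -natrM ler_nat. Qed.

Definition f1 (d : nat) : rat :=
  if ~~ odd d then 2 / (d.+2)%:R else (2 * (d.+2)%:R) / ((d.+1)%:R * (d.+3)%:R).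

Lemma fvals_lower d r : fvals 1 d r -> f1 d <= r /\ 2 / (d.+2)%:R <= r.
Proof.
move=> [T [g [gs n0 avg ->]]]; rewrite avgdeg_le_nat // in avg.
have [l_even l_odd] := alpha1_lower gs avg.
have l2 : 2 / (d.+2)%:R <= kratio g 1 by rewrite ratio_le //; lia.
split=> //; rewrite /f1; case: ifP => // /negbFE od.
by rewrite -!natrM ratio_le //; have := l_odd od; lia.
Qed.

Lemma is_f_attained k d v :
  (forall r, fvals k d r -> v <= r) -> fvals k d v -> is_f k d v.
Proof. by move=> low fv; split=> // y hy; exact: hy. Qed.

(* J_{d+2} is extremal for d even: alpha_1 = 2 and d(J_{d+2}) = d. *)
Lemma Jrel_extremal d : ~~ odd d ->
  [/\ simple_graph (@Jrel d.+2), avgdeg (@Jrel d.+2) <= d%:R & kratio (@Jrel d.+2) 1 = f1 d].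
Proof.
move=> od; have gs := Jrel_simple d.+2.
have avg : (2 * nedges (@Jrel d.+2) <= d * #|'I_d.+2|)%N.
  by rewrite card_ord; have := @Jrel_edges d.+2; rewrite /= !negbK subn2; apply.
have [l_even _] := alpha1_lower gs avg.
have up : (alpha (@Jrel d.+2) 1 <= 2)%N by apply/bigmax_leqP => S; exact: Jrel_kindep1_le.
have a2 : alpha (@Jrel d.+2) 1 = 2%N by rewrite card_ord in l_even; nia.
split=> //; first by rewrite avgdeg_le_nat // card_ord.
by rewrite /kratio a2 card_ord /f1 od.
Qed.

(* For d odd, (d+3) J_{d+1} + (d+1) J_{d+3} has n = 2(d+1)(d+3), d(G) = d and
   alpha_1 = 4(d+2): two vertices per copy. *)
Lemma oddGraph_extremal d : odd d ->
  [/\ simple_graph (@oddGraph d), avgdeg (@oddGraph d) <= d%:R &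
      kratio (@oddGraph d) 1 = f1 d].
Proof.
move=> od; have gs := oddGraph_simple d.
have n_eq : #|{: 'I_d.+3 * 'I_d.+1 + 'I_d.+1 * 'I_d.+3}| = (2 * (d.+1 * d.+3))%N.
  by rewrite card_sum !card_prod !card_ord; lia.
have avg : (2 * nedges (@oddGraph d) <= d * #|{: 'I_d.+3 * 'I_d.+1 + 'I_d.+1 * 'I_d.+3}|)%N.
  by rewrite n_eq; apply: oddGraph_edges.
have [_ l_odd] := alpha1_lower gs avg.
have up : (alpha (@oddGraph d) 1 <= 4 * d.+2)%N.
  by apply/bigmax_leqP => S; exact: oddGraph_kindep1_le.
have := l_odd od; rewrite n_eq => low.
have a_eq : alpha (@oddGraph d) 1 = (4 * d.+2)%N by nia.
split=> //; first by rewrite avgdeg_le_nat // n_eq.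
by rewrite /kratio n_eq a_eq /f1 od /= -!natrM; apply: ratio_eq => //; lia.
Qed.

Lemma alpha1_ceil_bound (T : finType) (g : rel T) : simple_graph g -> (0 < #|T|)%N ->
  (2 * #|T|)%:R / ((Num.ceil (avgdeg g))%:~R + 2) <= ((alpha g 1)%:R : rat).
Proof.
move=> gs n0.
have avg0 : 0 <= avgdeg g by rewrite /avgdeg divr_ge0 // ler0n.
have := ceil_ge (avgdeg g); have : 0 <= Num.ceil (avgdeg g).
  by rewrite ceil_ge0 (lt_le_trans _ avg0).
case: (Num.ceil (avgdeg g)) => // k _ hk.
rewrite avgdeg_le_nat // in hk; have [l_even _] := alpha1_lower gs hk.
rewrite -[k%:~R]/(k%:R : rat) -natrD ler_pdivrMr ?ltr0n ?addn2 //.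
by rewrite -natrM ler_nat; lia.
Qed.

Theorem mainTheorem6 (d : nat) :
  [/\
    (* (1) *)
    is_f 1 d (if ~~ odd d then 2 / (d.+2)%:R
              else (2 * (d.+2)%:R) / ((d.+1)%:R * (d.+3)%:R)),
    (* (2) *)
    (if ~~ odd d then
       simple_graph (@Jrel d.+2) /\ avgdeg (@Jrel d.+2) <= d%:R /\
       is_f 1 d (kratio (@Jrel d.+2) 1)
     else
       simple_graph (@oddGraph d) /\ avgdeg (@oddGraph d) <= d%:R /\
       is_f 1 d (kratio (@oddGraph d) 1)),
    (* (3) *)
    (forall x : rat, is_f 1 d x -> 2 / (d.+2)%:R <= x)
  & (* (4) *)
    (forall (T : finType) (g : rel T), simple_graph g -> (0 < #|T|)%N ->
       (2 * #|T|)%:R / ((Num.ceil (avgdeg g))%:~R + 2) <= ((alpha g 1)%:R : rat))].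
Proof.
have lower r : fvals 1 d r -> f1 d <= r by case/fvals_lower.
have extremal : if ~~ odd d then
    [/\ simple_graph (@Jrel d.+2), avgdeg (@Jrel d.+2) <= d%:R &
        kratio (@Jrel d.+2) 1 = f1 d]
  else [/\ simple_graph (@oddGraph d), avgdeg (@oddGraph d) <= d%:R &
        kratio (@oddGraph d) 1 = f1 d].
  by case: ifP => od; [exact: Jrel_extremal | apply: oddGraph_extremal; exact: negbFE].
have f1_inf : is_f 1 d (f1 d).
  apply: is_f_attained => //; move: extremal; case: ifP => _ [gs avg <-].
  - by exists _, (@Jrel d.+2); split; rewrite ?card_ord.
  - by exists _, (@oddGraph d); split=> //; apply/card_gt0P; exists (inl (ord0, ord0)).
split=> //.
- by move: extremal; case: ifP => _ [gs avg ->].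
- by move=> x [_ x_sup]; apply: x_sup => r /fvals_lower[].
- exact: alpha1_ceil_bound.
Qed.
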